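(* Consider the ride-hailing model in the context. If $(\bm x^A,\bm w^A,\bm x^C,\bm w^C)$ is a mixed-fleet equilibrium and $\bm b^C_e=(\sum_{j=1}^L x^C_{ji})_{i=1}^L$, then $\bm x^C$ is an optimal solution of $\mathcal{CV}(\bm b^C_e)$ and $\bm w^C$ is a vector of Lagrange multipliers of its capacity constraints.
   Context: Model. There are $L$ regions $\{1,\dots,L\}$. For regions $i,j$, $b_{ij}\ge0$ is the customer rate from $i$ to $j$; $b_i=\sum_j b_{ij}$ (assumed $>0$), $q_{ij}=b_{ij}/b_i$. Travel times satisfy $t_{ij}>0$ for $i\ne j$, $t_{ii}=0$. Constants: $p>0$, $c\ge0$, $R\in(0,1)$, $N>0$, $M\ge0$. For $i,\alpha$: $\tau^{dr}_{i\alpha}=t_{i\alpha}+\sum_j q_{\alpha j}t_{\alpha j}$, $r^A_{i\alpha}=p\sum_j q_{\alpha j}t_{\alpha j}-c\tau^{dr}_{i\alpha}$, $r^C_{i\alpha}=p(1-R)\sum_j q_{\alpha j}t_{\alpha j}-c\tau^{dr}_{i\alpha}$, $r^{C2P}_{i\alpha}=pR\sum_j q_{\alpha j}t_{\alpha j}$. A matrix $\bm x\in\mathbb R^{L\times L}_{\ge0}$ satisfies flow balance if $\sum_j(\sum_k x_{kj})q_{ji}=\sum_\alpha x_{i\alpha}$ for all $i$. $\mathcal{CV}(\bm b^C)$: maximize $N\log\sum_{i,\alpha}r^C_{i\alpha}x_{i\alpha}-\sum_{i,\alpha}\tau^{dr}_{i\alpha}x_{i\alpha}$ over $\bm x\ge0$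 satisfying flow balance and $\sum_j x_{ji}\le b^C_i$ for all $i$. Mixed-fleet equilibrium: a tuple $(\bm x^A,\bm w^A,\bm x^C,\bm w^C)$ with $\bm x^A,\bm x^C\in\mathbb R^{L\times L}_{\ge0}$, $\bm w^A,\bm w^C\in\mathbb R^L_{\ge0}$ such that (i) $\sum_j(x^A_{ji}+x^C_{ji})\le b_i$ for all $i$; $\bm x^A,\bm x^C$ satisfy flow balance; $\sum_{i,\alpha}(\tau^{dr}_{i\alpha}+w^A_\alpha)x^A_{i\alpha}\le M$ and $\sum_{i,\alpha}(\tau^{dr}_{i\alpha}+w^C_\alpha)x^C_{i\alpha}=N$; (ii) $\bm x^C$ maximizes $\sum_{i,\alpha}r^C_{i\alpha}x_{i\alpha}$ over all $\bm x\ge0$ satisfying flow balance and $\sum_{i,\alpha}(\tau^{dr}_{i\alpha}+w^C_\alpha)x_{i\alpha}=N$; (iii) the platform profit $\sum_{i,\alpha}r^A_{i\alpha}x^A_{i\alpha}+\sum_{i,\alpha}r^{C2P}_{i\alpha}x^C_{i\alpha}$ is maximal among all tuples satisfying (i) and (ii). *)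

From HB Require Import structures.
From mathcomp Require Import all_boot all_order all_algebra.
From mathcomp Require Import reals ereal exp.
Set Implicit Arguments. Unset Strict Implicit. Unset Printing Implicit Defensive.
Import Order.TTheory GRing.Theory Num.Theory.
Local Open Scope ring_scope.

Record model (R : realType) (L : nat) := Model {
  b : 'I_L -> 'I_L -> R;   (* customer rate from i to j *)
  t : 'I_L -> 'I_L -> R;   (* travel times *)
  p : R; c : R; Rc : R;     (* Rc is the commission rate R *)
  N : R; M : R }.

Section Model.
Variables (R : realType) (L : nat) (m : model R L).

Definition model_ok : Prop :=
  (forall i j, 0 <= b m i j) /\
  (forall i, 0 < \sum_(j < L) b m i j) /\
  (forall i j, i != j -> 0 < t m i j) /\
  (forall i, t m i i = 0) /\
  0 < p m /\ 0 <= c m /\ 0 < Rc m < 1 /\ 0 < N m /\ 0 <= M m.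

Definition bsum (i : 'I_L) : R := \sum_(j < L) b m i j.
Definition q (i j : 'I_L) : R := b m i j / bsum i.
Definition tbar (a : 'I_L) : R := \sum_(j < L) q a j * t m a j.
Definition tau_dr (i a : 'I_L) : R := t m i a + tbar a.
Definition rA (i a : 'I_L) : R := p m * tbar a - c m * tau_dr i a.
Definition rC (i a : 'I_L) : R := p m * (1 - Rc m) * tbar a - c m * tau_dr i a.
Definition rC2P (i a : 'I_L) : R := p m * Rc m * tbar a.

Definition lin (f x : 'I_L -> 'I_L -> R) : R :=
  \sum_(i < L) \sum_(a < L) f i a * x i a.

Definition nonneg_mx (x : 'I_L -> 'I_L -> R) : Prop := forall i j, 0 <= x i j.
Definition nonneg_vec (w : 'I_L -> R) : Prop := forall i, 0 <= w i.

Definition flow_balance (x : 'I_L -> 'I_L -> R) : Prop :=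
  forall i, \sum_(j < L) (\sum_(k < L) x k j) * q j i = \sum_(a < L) x i a.

Definition inflow (x : 'I_L -> 'I_L -> R) (i : 'I_L) : R := \sum_(j < L) x j i.

Definition tauw (w : 'I_L -> R) (i a : 'I_L) : R := tau_dr i a + w a.

(* Objective N log(sum r^C x) - sum tau^dr x, as an extended real:
   -oo outside the domain of log (sum r^C x <= 0). *)
Definition CV_obj (x : 'I_L -> 'I_L -> R) : \bar R :=
  if 0 < lin rC x then (N m * ln (lin rC x) - lin tau_dr x)%:E else -oo%E.

Definition CV_feasible (bC : 'I_L -> R) (x : 'I_L -> 'I_L -> R) : Prop :=
  nonneg_mx x /\ flow_balance x /\ (forall i, inflow x i <= bC i).

Definition CV_optimal (bC : 'I_L -> R) (x : 'I_L -> 'I_L -> R) : Prop :=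
  CV_feasible bC x /\
  forall y, CV_feasible bC y -> (CV_obj y <= CV_obj x)%E.

Definition CV_lagrangian (bC w : 'I_L -> R) (x : 'I_L -> 'I_L -> R) : \bar R :=
  (CV_obj x + (\sum_(i < L) w i * (bC i - inflow x i))%:E)%E.

(* w is a vector of Lagrange multipliers of the capacity constraints of
   CV(bC) at x: dual feasibility, complementary slackness, and x maximizes
   the Lagrangian over the remaining constraints (x >= 0, flow balance). *)
Definition capacity_multipliers (bC : 'I_L -> R) (x : 'I_L -> 'I_L -> R)
    (w : 'I_L -> R) : Prop :=
  nonneg_vec w /\
  (forall i, w i * (bC i - inflow x i) = 0) /\
  forall y, nonneg_mx y -> flow_balance y ->
    (CV_lagrangian bC w y <= CV_lagrangian bC w x)%E.

Definition eq_cond_i (xA : 'I_L -> 'I_L -> R) (wA : 'I_L -> R)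
    (xC : 'I_L -> 'I_L -> R) (wC : 'I_L -> R) : Prop :=
  [/\ nonneg_mx xA, nonneg_mx xC, nonneg_vec wA, nonneg_vec wC &
  [/\ forall i, \sum_(j < L) (xA j i + xC j i) <= bsum i,
      flow_balance xA, flow_balance xC,
      lin (tauw wA) xA <= M m &
      lin (tauw wC) xC = N m]].

Definition eq_cond_ii (xC : 'I_L -> 'I_L -> R) (wC : 'I_L -> R) : Prop :=
  forall x, nonneg_mx x -> flow_balance x -> lin (tauw wC) x = N m ->
    lin rC x <= lin rC xC.

Definition platform_profit (xA xC : 'I_L -> 'I_L -> R) : R :=
  lin rA xA + lin rC2P xC.

Definition mixed_equilibrium (xA : 'I_L -> 'I_L -> R) (wA : 'I_L -> R)
    (xC : 'I_L -> 'I_L -> R) (wC : 'I_L -> R) : Prop :=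
  [/\ eq_cond_i xA wA xC wC, eq_cond_ii xC wC &
   forall xA' wA' xC' wC', eq_cond_i xA' wA' xC' wC' -> eq_cond_ii xC' wC' ->
     platform_profit xA' xC' <= platform_profit xA xC].

End Model.

(* At an equilibrium, x^C maximizes r^C x on the slice {x >= 0 balanced :
   (tau^dr + w^C) x = N}.  Rescaling any balanced y >= 0 onto that slice and
   using ln s <= s - 1 shows that x^C maximizes the Lagrangian
   N log(r^C y) - (tau^dr + w^C) y + w^C b^C of CV(b^C); complementary
   slackness holds trivially for b^C = inflow of x^C, and weak duality then
   yields optimality. *)
From mathcomp Require Import all_boot all_order all_algebra.
From mathcomp Require Import reals ereal exp.
From mathcomp Require Import lra.
Import Order.TTheory GRing.Theory Num.Theory.
Local Open Scope ring_scope.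

Lemma ln_scaled_le {R : realType} {N tau r r' : R} :
  0 < N -> 0 < tau -> 0 < r -> N / tau * r <= r' ->
  N * ln r - tau <= N * ln r' - N.
Proof.
move=> N0 tau0 r0 le_r.
have Ntau0 : 0 < N / tau by rewrite divr_gt0.
have r'0 : 0 < r' by apply: lt_le_trans le_r; rewrite mulr_gt0.
have ln_r : ln (N / tau) + ln r <= ln r'.
  rewrite -lnM ?posrE // ler_ln ?posrE //; exact: mulr_gt0.
have ln_Ntau : - ln (N / tau) <= tau / N - 1.
  rewrite -lnV ?posrE // invf_div.
  have := @le_ln1Dx _ (tau / N - 1); rewrite [1 + _]addrC subrK; apply.
  by rewrite ltrBrDr addNr divr_gt0.
have N_ln : N * ln r <= N * ln r' + (tau - N).
  have -> : tau - N = N * (tau / N - 1).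
    by rewrite mulrBr mulr1 mulrCA divff ?mulr1 ?gt_eqF.
  by rewrite -mulrDr; apply: ler_wpM2l; [exact: ltW | lra].
lra.
Qed.

Section ModelAlgebra.
Local Set Implicit Arguments.
Local Unset Strict Implicit.
Variables (R : realType) (L : nat) (m : model R L).
Implicit Types (f x y : 'I_L -> 'I_L -> R) (w bC : 'I_L -> R) (k : R).

Lemma lin_addr f x y : lin f (fun i j => x i j + y i j) = lin f x + lin f y.
Proof.
rewrite /lin -big_split; apply: eq_bigr => i _; rewrite -big_split.
by apply: eq_bigr => a _; rewrite mulrDr.
Qed.

Lemma lin_scaler f x k : lin f (fun i j => k * x i j) = k * lin f x.
Proof.
rewrite /lin mulr_sumr; apply: eq_bigr => i _; rewrite mulr_sumr.
by apply: eq_bigr => a _; rewrite mulrCA.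
Qed.

Lemma lin_ge0 f x : (forall i a, 0 <= f i a) -> nonneg_mx x -> 0 <= lin f x.
Proof.
by move=> f0 x0; apply: sumr_ge0 => i _; apply: sumr_ge0 => a _; apply: mulr_ge0.
Qed.

Lemma flow_balanceD x y :
  flow_balance m x -> flow_balance m y ->
  flow_balance m (fun i j => x i j + y i j).
Proof.
move=> bal_x bal_y i; rewrite big_split /= -bal_x -bal_y -big_split.
by apply: eq_bigr => j _; rewrite big_split mulrDl.
Qed.

Lemma flow_balanceZ x k :
  flow_balance m x -> flow_balance m (fun i j => k * x i j).
Proof.
move=> bal_x i; rewrite -mulr_sumr -bal_x mulr_sumr.
by apply: eq_bigr => j _; rewrite -mulr_sumr mulrA.
Qed.

Lemma lin_tauw w x :
  lin (tauw m w) x = lin (tau_dr m) x + \sum_(i < L) w i * inflow x i.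
Proof.
have -> : \sum_(i < L) w i * inflow x i = \sum_(i < L) \sum_(a < L) w a * x i a.
  by rewrite exchange_big; apply: eq_bigr => a _; rewrite mulr_sumr.
rewrite /lin -big_split; apply: eq_bigr => i _; rewrite -big_split.
by apply: eq_bigr => a _; rewrite mulrDl.
Qed.

Lemma tauw_ge0 w : model_ok m -> nonneg_vec w -> forall i a, 0 <= tauw m w i a.
Proof.
move=> [b0 [bsum0 [t_gt0 [t_diag _]]]] w0 i a.
have t0 i' j : 0 <= t m i' j.
  case: (eqVneq i' j) => [<-|ne]; first by rewrite t_diag.
  exact: ltW (t_gt0 _ _ ne).
rewrite /tauw /tau_dr /tbar !addr_ge0 //.
apply: sumr_ge0 => j _; apply: mulr_ge0 => //.
by apply: divr_ge0 => //; apply: ltW; apply: bsum0.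
Qed.

Lemma CV_lagrangian_gt0 bC w y : 0 < lin (rC m) y ->
  CV_lagrangian m bC w y =
  (N m * ln (lin (rC m) y) - lin (tauw m w) y + \sum_(i < L) w i * bC i)%:E.
Proof.
move=> ry; rewrite /CV_lagrangian /CV_obj ry -EFinD lin_tauw; congr (_%:E).
rewrite (eq_bigr (fun i => w i * bC i - w i * inflow y i)); last first.
  by move=> i _; rewrite mulrBr.
by rewrite sumrB; lra.
Qed.

Lemma CV_lagrangian_le0 bC w y : ~~ (0 < lin (rC m) y) ->
  CV_lagrangian m bC w y = -oo%E.
Proof. by move=> /negbTE ry; rewrite /CV_lagrangian /CV_obj ry. Qed.

Lemma capacity_multipliers_optimal bC x w :
  CV_feasible m bC x -> capacity_multipliers m bC x w -> CV_optimal m bC x.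
Proof.
move=> feas_x [w0 [slack lag_max]]; split => // y [y0 [bal_y cap_y]].
have slack0 : \sum_(i < L) w i * (bC i - inflow x i) = 0.
  by apply: big1 => i _; apply: slack.
apply: (le_trans _ (le_trans (lag_max y y0 bal_y) _)).
- rewrite /CV_lagrangian leeDl // lee_fin sumr_ge0 // => i _.
  by rewrite mulr_ge0 ?subr_ge0.
- by rewrite /CV_lagrangian slack0 adde0.
Qed.

End ModelAlgebra.

Section Equilibrium.
Local Set Implicit Arguments.
Local Unset Strict Implicit.
Variables (R : realType) (L : nat) (m : model R L).
Variables (xC : 'I_L -> 'I_L -> R) (wC : 'I_L -> R).
Hypotheses (m_ok : model_ok m) (wC0 : nonneg_vec wC) (xC0 : nonneg_mx xC).
Hypotheses (bal_xC : flow_balance m xC) (cost_xC : lin (tauw m wC) xC = N m).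
Hypothesis xC_max : eq_cond_ii m xC wC.

Let N0 : 0 < N m.
Proof. by case: m_ok => _ [_ [_ [_ [_ [_ [_ []]]]]]]. Qed.

(* A revenue-earning y of zero cost could be added to x^C without leaving
   the slice. *)
Lemma equilibrium_cost_gt0 y : nonneg_mx y -> flow_balance m y ->
  0 < lin (rC m) y -> 0 < lin (tauw m wC) y.
Proof.
move=> y0 bal_y ry.
have cost0 : 0 <= lin (tauw m wC) y by apply: lin_ge0 => //; apply: tauw_ge0.
rewrite lt_neqAle cost0 andbT eq_sym; apply/negP => /eqP cost_y.
have xCy0 : nonneg_mx (fun i j => xC i j + y i j) by move=> i j; apply: addr_ge0.
have := xC_max xCy0 (flow_balanceD bal_xC bal_y).
by rewrite !lin_addr cost_xC cost_y addr0 => /(_ erefl); lra.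
Qed.

Lemma equilibrium_scaled_le y : nonneg_mx y -> flow_balance m y ->
  0 < lin (rC m) y ->
  N m / lin (tauw m wC) y * lin (rC m) y <= lin (rC m) xC.
Proof.
move=> y0 bal_y ry; have cost_y := equilibrium_cost_gt0 y0 bal_y ry.
set k := N m / lin (tauw m wC) y.
have ky0 : nonneg_mx (fun i j => k * y i j).
  by move=> i j; rewrite mulr_ge0 // ltW // divr_gt0.
rewrite -lin_scaler; apply: (xC_max ky0 (flow_balanceZ k bal_y)).
by rewrite lin_scaler mulrVK // unitfE gt_eqF.
Qed.

Lemma equilibrium_lagrangian_max y : nonneg_mx y -> flow_balance m y ->
  (CV_lagrangian m (inflow xC) wC y <= CV_lagrangian m (inflow xC) wC xC)%E.
Proof.
move=> y0 bal_y; have [ry|ry] := boolP (0 < lin (rC m) y); last first.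
  by rewrite CV_lagrangian_le0 // leNye.
have cost_y := equilibrium_cost_gt0 y0 bal_y ry.
have le_rC := equilibrium_scaled_le y0 bal_y ry.
have rxC : 0 < lin (rC m) xC.
  by apply: lt_le_trans le_rC; rewrite mulr_gt0 // divr_gt0.
have := ln_scaled_le N0 cost_y ry le_rC.
by rewrite !CV_lagrangian_gt0 // cost_xC lee_fin lerD2r.
Qed.

End Equilibrium.

Theorem proposition4 (R : realType) (L : nat) (m : model R L)
    (xA : 'I_L -> 'I_L -> R) (wA : 'I_L -> R)
    (xC : 'I_L -> 'I_L -> R) (wC : 'I_L -> R) :
  model_ok m ->
  mixed_equilibrium m xA wA xC wC ->
  CV_optimal m (inflow xC) xC /\ capacity_multipliers m (inflow xC) xC wC.
Proof.
move=> m_ok [[_ xC0 _ wC0 [_ _ bal_xC _ cost_xC]] xC_max _].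
have feas : CV_feasible m (inflow xC) xC by [].
have mult : capacity_multipliers m (inflow xC) xC wC.
  split=> //; split=> [i|y]; first by rewrite subrr mulr0.
  exact: equilibrium_lagrangian_max.
by split=> //; exact: capacity_multipliers_optimal feas mult.
Qed.
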